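(* (1) If $\mathbf n_1=(n_{1,0},\dots,n_{1,N})$ and $\mathbf n_2=(n_{2,0},\dots,n_{2,N})$ satisfy $\tilde n_{1,i}\ge\tilde n_{2,i}$ for all $i=0,\dots,N$ (tildes denoting nondecreasing rearrangements), then $d_{\mathbf n_1}(r)\ge d_{\mathbf n_2}(r)$ for all $r\ge0$. (2) If $\mathbf n_1=(n_{1,0},\dots,n_{1,N_1})$ and $\mathbf n_2=(n_{2,0},\dots,n_{2,N_2})$ are such that the multiset $\{n_{2,0},\dots,n_{2,N_2}\}$ is contained in the multiset $\{n_{1,0},\dots,n_{1,N_1}\}$, then $d_{\mathbf n_1}(r)\le d_{\mathbf n_2}(r)$ for all $r\ge0$.
   Context: For a vector $\mathbf n=(n_0,\dots,n_N)$ of positive integers ($N\ge1$), let $\tilde n_0\le\cdots\le\tilde n_N$ be its nondecreasing rearrangement, $n_{\min}=\tilde n_0$, $c_i=1-i+\min_{k'=1,\dots,N}\lfloor(\sum_{l=0}^{k'}\tilde n_l-i)/k'\rfloor$ for $i=1,\dots,n_{\min}$, and $d_{\mathbf n}(k)=\sum_{i=k+1}^{n_{\min}}c_i$ for integers $0\le k\le n_{\min}$; $d_{\mathbf n}(r)$ for real $r\in[0,n_{\min}]$ is the piecewise-linear interpolation of these points, and $d_{\mathbf n}(r)=0$ for $r>n_{\min}$. This is the diversity-multiplexing tradeoff of the $(n_0,\dots,n_N)$ Rayleigh product channel $\mathbf y=\sqrt{\mathsf{SNR}/(n_1\cdots n_N)}\mathbf H_1\cdots\mathbf H_N\mathbf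 x+\mathbf z$ with independent i.i.d. $\mathcal{CN}(0,1)$ matrices $\mathbf H_i\in\mathbb C^{n_{i-1}\times n_i}$. *)

From HB Require Import structures.
From mathcomp Require Import all_boot all_order all_algebra.
Set Implicit Arguments. Unset Strict Implicit. Unset Printing Implicit Defensive.
Import Order.TTheory GRing.Theory Num.Theory.

(* An antenna/dimension vector n = (n_0,...,n_N) is a seq nat of size N+1. *)

Definition nsorted (n : seq nat) : seq nat := sort leq n.

Definition nt (n : seq nat) (l : nat) : nat := nth 0%N (nsorted n) l.

Definition nmin (n : seq nat) : nat := nt n 0.

Definition Nof (n : seq nat) : nat := (size n).-1.

(* floor((sum_{l=0}^{k'} ñ_l - i)/k'); numerator is >= 0 for i <= n_min *)
Definition cterm (n : seq nat) (i k' : nat) : nat :=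
  ((\sum_(0 <= l < k'.+1) nt n l) - i) %/ k'.

(* min_{k'=1..N} cterm  (the seed value cterm 1 is itself one of the terms, N >= 1) *)
Definition cmin (n : seq nat) (i : nat) : nat :=
  \big[minn/cterm n i 1]_(1 <= k' < (Nof n).+1) cterm n i k'.

Definition c_coef (n : seq nat) (i : nat) : int :=
  (1 - (i%:Z) + (cmin n i)%:Z)%R.

Definition d_int (n : seq nat) (k : nat) : int :=
  (\sum_(k.+1 <= i < (nmin n).+1) c_coef n i)%R.

(* d_n(r) for real r >= 0: piecewise-linear interpolation on [0, n_min],
   zero for r > n_min (and d_n(n_min) = 0 by definition). *)
Definition dmt (R : archiNumFieldType) (n : seq nat) (r : R) : R :=
  let k := `|Num.floor r|%N in
  if (nmin n <= k)%N then 0%R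
  else ((d_int n k)%:~R + (r - k%:R) * ((d_int n k.+1)%:~R - (d_int n k)%:~R))%R.

Definition valid_dims (n : seq nat) : Prop :=
  (1 < size n)%N /\ all (fun x => 0 < x)%N n.

From HB Require Import structures.
From mathcomp Require Import all_boot all_order all_algebra.
Import Order.TTheory GRing.Theory Num.Theory.

Set Implicit Arguments.
Unset Strict Implicit.

(* Both statements are instances of one comparison principle: if the vector a
   has at least as many entries as b (so N_b <= N_a) and its order statistics
   are pointwise smaller (ñ_{a,l} <= ñ_{b,l} for l < size b), then
   d_a(r) <= d_b(r) for all r >= 0.  The principle propagates through the
   definition of d layer by layer:
   - every floor term of c_i is monotone in the ñ_l, and the minimum over
     k' = 1..N_a ranges over more terms than the one over k' = 1..N_b, so
     c_{a,i} <= c_{b,i};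
   - c_{b,i} >= 0 for 1 <= i <= n_min(b) (each floor term is >= i), so the sum
     d_b(k) may be extended from n_min(a) to n_min(b), giving d_a(k) <= d_b(k);
   - linear interpolation with weights in [0,1] preserves the order.
   Part (1) is the principle with a = n2, b = n1.  For part (2) we show that
   multiset inclusion n2 ⊆ n1 implies ñ_{1,l} <= ñ_{2,l}, by characterising
   the l-th order statistic of a sorted list through counting.  Positivity of the entries is never
   needed; only N >= 1 for the larger vector b. *)

Lemma sorted_nth_leq (s : seq nat) l x : sorted leq s -> l < size s ->
  (nth 0 s l <= x) = (l < count (fun y => y <= x) s).
Proof.
move=> s_sorted ls; have le_nth := sorted_leq_nth leq_trans leqnn 0 s_sorted.
apply/idP/idP => [nth_le_x | ].
- (* the first l+1 entries are all <= nth 0 s l <= x *)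
  have all_take : all (fun y => y <= x) (take l.+1 s).
    apply/(all_nthP 0) => j; rewrite size_takel // => jl; rewrite nth_take //.
    by apply: leq_trans nth_le_x; apply: le_nth; rewrite ?inE ?(leq_trans jl).
  move: all_take; rewrite all_count => /eqP count_take.
  by rewrite -(cat_take_drop l.+1 s) count_cat count_take size_takel // leq_addr.
- (* otherwise the entries from index l on are all > x *)
  apply: contraTT; rewrite -ltnNge => x_lt_nth; rewrite -leqNgt.
  have none_drop : count (fun y => y <= x) (drop l s) = 0.
    apply/eqP; rewrite -leqn0 leqNgt -has_count; apply/(has_nthP 0) => -[j].
    rewrite size_drop nth_drop ltn_subRL => jl; apply/negP; rewrite -ltnNge.
    by apply: leq_trans x_lt_nth _; apply: le_nth; rewrite ?inE ?leq_addr.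
  rewrite -(cat_take_drop l s) count_cat none_drop addn0.
  by apply: leq_trans (count_size _ _) _; rewrite size_take; case: ltnP.
Qed.

Lemma nt_mono n l1 l2 : l1 <= l2 -> l2 < size n -> nt n l1 <= nt n l2.
Proof.
move=> l12 l2n; apply: (sorted_leq_nth leq_trans leqnn _ (sort_sorted leq_total n));
  by rewrite ?inE ?size_sort ?(leq_ltn_trans l12).
Qed.

Lemma nmin_le_nt n l : l < size n -> nmin n <= nt n l.
Proof. exact: nt_mono. Qed.

Lemma count_submultiset {T : eqType} (p : pred T) {s1 s2 : seq T} :
  (forall x, count_mem x s2 <= count_mem x s1) -> count p s2 <= count p s1.
Proof.
move=> /count_subseqP[s sub_s perm_s].
by rewrite (permP perm_s); apply: leq_count_subseq.
Qed.

Lemma nt_submultiset n1 n2 l : (forall x, count_mem x n2 <= count_mem x n1) ->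
  l < size n2 -> nt n1 l <= nt n2 l.
Proof.
move=> sub l2; have sz : size n2 <= size n1.
  by rewrite -!count_predT; apply: count_submultiset.
rewrite /nt /nsorted (sorted_nth_leq _ (sort_sorted leq_total n1)); last first.
  by rewrite size_sort (leq_trans l2 sz).
rewrite count_sort; apply: leq_trans (count_submultiset _ sub).
by rewrite -(count_sort leq) -sorted_nth_leq ?(sort_sorted leq_total) ?size_sort.
Qed.

Lemma bigmin_le (x0 : nat) (F : nat -> nat) m n j : m <= j < n ->
  \big[minn/x0]_(m <= k < n) F k <= F j.
Proof.
rewrite -mem_index_iota; elim: (index_iota m n) => [|y r IH] //.
rewrite in_cons big_cons => /orP[/eqP -> | jr]; first exact: geq_minl.
by apply: leq_trans (geq_minr _ _) (IH jr).
Qed.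

Lemma bigmin_ge (x0 v : nat) (F : nat -> nat) m n :
  v <= x0 -> (forall k, m <= k < n -> v <= F k) ->
  v <= \big[minn/x0]_(m <= k < n) F k.
Proof.
move=> v_x0 v_F; rewrite big_seq; apply: (big_ind (fun x => v <= x)) => //.
  by move=> x y vx vy; rewrite leq_min vx vy.
by move=> k; rewrite mem_index_iota; apply: v_F.
Qed.

Lemma Nof_ge1 n : 1 < size n -> 1 <= Nof n.
Proof. by rewrite /Nof; case: (size n) => // -[]. Qed.

Lemma Nof_lt_size n k : 1 < size n -> k <= Nof n -> k < size n.
Proof. by rewrite /Nof; case: (size n). Qed.

Lemma cterm_mono a b i k : (forall l, l <= k -> nt a l <= nt b l) ->
  cterm a i k <= cterm b i k.
Proof.
move=> le_ab; rewrite /cterm leq_div2r // leq_sub2r // !big_mkord.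
by apply: leq_sum => l _; apply: le_ab; rewrite -ltnS.
Qed.

(* The minimum defining c_i is monotone: a has pointwise smaller order
   statistics and its minimum runs over the larger range k' = 1..N_a. *)
Lemma cmin_mono a b i : 1 < size b -> size b <= size a ->
  (forall l, l < size b -> nt a l <= nt b l) -> cmin a i <= cmin b i.
Proof.
move=> b_gt1 ba le_ab.
have Nba : Nof b <= Nof a by rewrite /Nof -!subn1 leq_sub2r.
have le_term k : 1 <= k <= Nof b -> cmin a i <= cterm b i k.
  case/andP=> k1 kN; apply: (@leq_trans (cterm a i k)).
    by apply: bigmin_le; rewrite k1 ltnS (leq_trans kN).
  by apply: cterm_mono => l lk; apply/le_ab/Nof_lt_size/(leq_trans lk).
apply: bigmin_ge => [|k /andP[k1]]; first by rewrite le_term // Nof_ge1.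
by rewrite ltnS => kN; apply: le_term; rewrite k1.
Qed.

(* For i <= n_min every floor term is at least i: the sum of the k'+1
   smallest entries is at least (k'+1) n_min >= i + i k'. *)
Lemma cterm_ge n i k : 1 < size n -> 0 < k -> k <= Nof n -> i <= nmin n ->
  i <= cterm n i k.
Proof.
move=> n_gt1 k0 kN i_min; rewrite /cterm leq_divRL //.
have sum_ge : k.+1 * nmin n <= \sum_(0 <= l < k.+1) nt n l.
  rewrite -{1}(subn0 k.+1) -sum_nat_const_nat !big_mkord.
  apply: leq_sum => l _; apply: nmin_le_nt.
  exact: leq_trans (ltn_ord l) (Nof_lt_size n_gt1 kN).
have i_le : i + i * k <= k.+1 * nmin n.
  by rewrite mulSn mulnC leq_add // leq_mul2l i_min orbT.
rewrite leq_subRL; first exact: leq_trans i_le sum_ge.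
exact: leq_trans (leq_addr _ _) (leq_trans i_le sum_ge).
Qed.

Lemma cmin_ge n i : 1 < size n -> i <= nmin n -> i <= cmin n i.
Proof.
move=> n_gt1 i_min; apply: bigmin_ge => [|k /andP[k1 kN]].
  exact: cterm_ge (Nof_ge1 n_gt1) i_min.
exact: cterm_ge.
Qed.

Local Open Scope ring_scope.

Lemma c_coef_ge0 n i : (1 < size n)%N -> (i <= nmin n)%N -> 0 <= c_coef n i.
Proof.
move=> n_gt1 i_min; rewrite /c_coef addrAC subr_ge0.
have i_cmin : i%:Z <= (cmin n i)%:Z by rewrite lez_nat cmin_ge.
by apply: le_trans i_cmin _; rewrite lerDr.
Qed.

Lemma c_coef_mono a b i : (cmin a i <= cmin b i)%N -> c_coef a i <= c_coef b i.
Proof. by move=> le_ab; rewrite /c_coef lerD2l lez_nat. Qed.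

Lemma d_int_ge0 n k : (1 < size n)%N -> 0 <= d_int n k.
Proof.
move=> n_gt1; rewrite /d_int big_seq sumr_ge0 // => i.
by rewrite mem_index_iota => /andP[_ i_min]; apply: c_coef_ge0.
Qed.

(* Smaller coefficients summed over a shorter range of nonnegative terms. *)
Lemma d_int_mono a b k : (1 < size b)%N -> (nmin a <= nmin b)%N ->
  (forall i, c_coef a i <= c_coef b i) -> d_int a k <= d_int b k.
Proof.
move=> b_gt1 min_ab le_c; rewrite /d_int.
apply: le_trans (_ : _ <= \sum_(k.+1 <= i < (nmin a).+1) c_coef b i) _.
  by apply: ler_sum => i _; apply: le_c.
have [ka | ak] := leqP k.+1 (nmin a).+1; last by rewrite big_geq ?d_int_ge0 // ltnW.
rewrite (big_cat_nat ka (_ : _ <= (nmin b).+1)%N) //= lerDl big_seq sumr_ge0 // => i.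
by rewrite mem_index_iota => /andP[_ i_min]; apply: c_coef_ge0.
Qed.

Lemma interp_mono (R : numDomainType) (x y x' y' t : R) :
  x <= x' -> y <= y' -> 0 <= t <= 1 -> x + t * (y - x) <= x' + t * (y' - x').
Proof.
move=> xx' yy' /andP[t0 t1].
have convex u v : u + t * (v - u) = (1 - t) * u + t * v.
  by rewrite mulrBr mulrBl mul1r addrA addrAC.
by rewrite !convex lerD // ler_wpM2l // subr_ge0.
Qed.

Lemma frac_part_01 (R : archiRealFieldType) (r : R) : 0 <= r ->
  0 <= r - (`|Num.floor r|%N)%:R <= 1.
Proof.
move=> r0; have floor_nat : ((`|Num.floor r|%N)%:R : R) = (Num.floor r)%:~R.
  by rewrite natr_absz ger0_norm ?floor_ge0.
rewrite floor_nat subr_ge0 floor_le lerBlDl.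
by apply: ltW; rewrite -[1]/(1%:~R) -intrD floorD1_gt.
Qed.

Lemma dmt_mono_of_d_int (R : archiRealFieldType) a b (r : R) :
  (1 < size b)%N -> (nmin a <= nmin b)%N ->
  (forall k, d_int a k <= d_int b k) -> 0 <= r -> dmt a r <= dmt b r.
Proof.
move=> b_gt1 min_ab le_d r0; have t01 := frac_part_01 r0.
rewrite /dmt; set K := `|Num.floor r|%N.
have [b_le | b_gt] := leqP (nmin b) K; first by rewrite (leq_trans min_ab b_le).
have [a_le | a_gt] := leqP (nmin a) K; last by apply: interp_mono; rewrite ?ler_int.
(* dmt a r = 0 is the interpolation between the values 0 and 0 *)
rewrite -[0](addr0 0) -{2}[0](mulr0 (r - K%:R)) -[X in _ * X](subrr 0).
by apply: interp_mono => //; rewrite ler0z d_int_ge0.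
Qed.

Lemma dmt_mono (R : archiRealFieldType) a b (r : R) :
  (1 < size b)%N -> (size b <= size a)%N ->
  (forall l, (l < size b)%N -> (nt a l <= nt b l)%N) ->
  0 <= r -> dmt a r <= dmt b r.
Proof.
move=> b_gt1 ba le_ab r0.
have min_ab : (nmin a <= nmin b)%N by apply: le_ab; apply: ltnW.
apply: dmt_mono_of_d_int => // k; apply: d_int_mono => // i.
exact/c_coef_mono/cmin_mono.
Qed.

Theorem corollary1 (R : archiRealFieldType) :
  (forall n1 n2 : seq nat,
     valid_dims n1 -> valid_dims n2 -> size n1 = size n2 ->
     (forall i, (i < size n1)%N -> (nt n2 i <= nt n1 i)%N) ->
     forall r : R, (0 <= r)%R -> (dmt n2 r <= dmt n1 r)%R)
  /\
  (forall n1 n2 : seq nat,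
     valid_dims n1 -> valid_dims n2 ->
     (forall x : nat, (count_mem x n2 <= count_mem x n1)%N) ->
     forall r : R, (0 <= r)%R -> (dmt n1 r <= dmt n2 r)%R).
Proof.
split=> [n1 n2 [n1_gt1 _] _ sz le_nt | n1 n2 _ [n2_gt1 _] sub] r r0.
  by apply: dmt_mono; rewrite -?sz.
apply: dmt_mono => // [|l]; last exact: nt_submultiset.
by rewrite -!count_predT count_submultiset.
Qed.
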